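(* Let $M$ be a multiplier on $\mathscr{A}(\mathbb{R})$ with multiplier sequence $(m_n)_{n\in\mathbb{N}}$. If $M$ is the generator of a $C_0$-semigroup $(T_t)_{t\geq 0}$ on $\mathscr{A}(\mathbb{R})$, then every $T_t$ is a multiplier, and for every $t\geq 0$ the multiplier sequence of $T_t$ is $(\exp(tm_n))_{n\in\mathbb{N}}$.
   Context: $\mathscr{A}(\mathbb{R})$ denotes the space of real analytic functions on $\mathbb{R}$ with its natural inductive limit topology $\mathscr{A}(\mathbb{R})=\operatorname{ind}_{U\supset\mathbb{R}}H(U)$, where $U$ runs over complex open neighbourhoods of $\mathbb{R}$ and $H(U)$ carries the compact-open topology. A continuous linear operator $M:\mathscr{A}(\mathbb{R})\to\mathscr{A}(\mathbb{R})$ is a multiplier if $M(x^n)=m_nx^n$ for all $n\in\mathbb{N}$; $(m_n)$ is its multiplier sequence. A $C_0$-semigroup is a family $(T_t)_{t\ge0}$ of continuous linear operators with $T_tT_s=T_{t+s}$, $T_0=I$, and $t\mapsto T_tf$ continuous for each $f$; its generator is $Af=\lim_{t\to0^+}(T_tf-f)/t$ on the domain where this limit exists. ''$M$ generates the semigroup'' means $M$ is its generator. *)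

From Stdlib Require Import Reals.
From Coquelicot Require Export Coquelicot.
Open Scope R_scope.

Definition Cexp (z : C) : C :=
  (exp (fst z) * cos (snd z), exp (fst z) * sin (snd z)).

Definition C_open (U : C -> Prop) : Prop :=
  forall z, U z -> exists r, 0 < r /\ forall w, Cmod (Cminus w z) < r -> U w.

(* compact subsets of C (= closed and bounded, Heine-Borel) *)
Definition C_compact (K : C -> Prop) : Prop :=
  (exists B, forall z, K z -> Cmod z <= B) /\
  (forall z, ~ K z -> exists r, 0 < r /\ forall w, Cmod (Cminus w z) < r -> ~ K w).

Definition holo_on (U : C -> Prop) (F : C -> C) : Prop :=
  forall z, U z -> @ex_derive C_AbsRing C_NormedModule F z.

Definition cnbhd_R (U : C -> Prop) : Prop :=
  C_open U /\ forall x : R, U (RtoC x).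

Definition analytic (f : R -> C) : Prop :=
  exists U F, cnbhd_R U /\ holo_on U F /\ forall x : R, F (RtoC x) = f x.

Definition fadd (f g : R -> C) : R -> C := fun x => Cplus (f x) (g x).
Definition fsub (f g : R -> C) : R -> C := fun x => Cminus (f x) (g x).
Definition fscale (a : C) (f : R -> C) : R -> C := fun x => Cmult a (f x).

(* Basic 0-neighbourhoods of the locally convex inductive limit topology
   A(R) = ind_{U} H(U): absolutely convex subsets V of A(R) whose preimage
   under each restriction map H(U) -> A(R) is a 0-neighbourhood of the
   compact-open topology of H(U), i.e. contains some
   {F : sup_K |F| < eps} with K compact in U. *)
Definition ind_nbhd0 (V : (R -> C) -> Prop) : Prop :=
  (forall f, V f -> analytic f) /\
  (forall f g (a b : C), V f -> V g -> Cmod a + Cmod b <= 1 ->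
       V (fadd (fscale a f) (fscale b g))) /\
  (forall U, cnbhd_R U ->
     exists K eps, C_compact K /\ (forall z, K z -> U z) /\ 0 < eps /\
       forall F, holo_on U F -> (forall z, K z -> Cmod (F z) < eps) ->
         V (fun x : R => F (RtoC x))).

(* continuous linear operators A(R) -> A(R) (operators are represented as
   maps on R -> C; only their behaviour on A(R) matters) *)
Definition cont_lin_op (L : (R -> C) -> (R -> C)) : Prop :=
  (forall f, analytic f -> analytic (L f)) /\
  (forall f g (a b : C), analytic f -> analytic g ->
      forall x, L (fadd (fscale a f) (fscale b g)) x
                = Cplus (Cmult a (L f x)) (Cmult b (L g x))) /\
  (forall V, ind_nbhd0 V -> exists W, ind_nbhd0 W /\ forall f, W f -> V (L f)).

Definition is_multiplier (M : (R -> C) -> (R -> C)) (m : nat -> C) : Prop :=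
  cont_lin_op M /\
  forall n x, M (fun y : R => RtoC (y ^ n)) x = Cmult (m n) (RtoC (x ^ n)).

Definition C0_semigroup (T : R -> (R -> C) -> (R -> C)) : Prop :=
  (forall t, 0 <= t -> cont_lin_op (T t)) /\
  (forall t s f, 0 <= t -> 0 <= s -> analytic f ->
      forall x, T t (T s f) x = T (t + s) f x) /\
  (forall f, analytic f -> forall x, T 0 f x = f x) /\
  (forall f, analytic f -> forall t0, 0 <= t0 ->
     forall V, ind_nbhd0 V -> exists d, 0 < d /\
       forall t, 0 <= t -> Rabs (t - t0) < d -> V (fsub (T t f) (T t0 f))).

(* M is the generator: for every f in A(R), (T_t f - f)/t -> M f as t -> 0+
   (so the domain of the generator is all of A(R) and the generator is M) *)
Definition generates (M : (R -> C) -> (R -> C)) (T : R -> (R -> C) -> (R -> C))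
  : Prop :=
  forall f, analytic f ->
    forall V, ind_nbhd0 V -> exists d, 0 < d /\
      forall t, 0 < t -> t < d ->
        V (fsub (fscale (RtoC (/ t)) (fsub (T t f) f)) (M f)).

(* Fix x and n and let g(s) = (T_s x^n)(x).  Point evaluation is continuous on A(R), so g is
   continuous, and since x^n is an eigenvector of the generator, M x^n = m_n x^n, applying the
   continuous operator T_s to the difference quotients of the orbit at 0 shows that g has right
   derivative m_n g(s).  Hence e^(-s m_n) g(s) is continuous with vanishing right derivative,
   so it is constant (a supremum argument), i.e. g(t) = e^(t m_n) x^n. *)

From Stdlib Require Import Reals Lra Classical FunctionalExtensionality.
Open Scope R_scope.

Lemma Cmod_sub_triangle (x y z : C) : Cmod (x - z)%C <= Cmod (x - y)%C + Cmod (y - z)%C.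
Proof.
replace (x - z)%C with ((x - y) + (y - z))%C by ring. apply Cmod_triangle.
Qed.

Lemma Cmod_le_abs_re_im (z : C) : Cmod z <= Rabs (fst z) + Rabs (snd z).
Proof.
destruct z as [a b]; unfold Cmod; cbn [fst snd].
rewrite <- (sqrt_pow2 (Rabs a + Rabs b)) by (pose proof (Rabs_pos a); pose proof (Rabs_pos b); lra).
apply sqrt_le_1_alt. rewrite <- (pow2_abs a), <- (pow2_abs b).
pose proof (Rabs_pos a); pose proof (Rabs_pos b); nra.
Qed.

Definition continuous_within (P : R -> Prop) (f : R -> C) (s : R) : Prop :=
  forall e, 0 < e -> exists d, 0 < d /\
    forall u, P u -> Rabs (u - s) < d -> Cmod (f u - f s)%C < e.

Definition right_derivative (f : R -> C) (s : R) (l : C) : Prop :=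
  forall e, 0 < e -> exists d, 0 < d /\
    forall h, 0 < h < d -> Cmod (f (s + h)%R - f s - h * l)%C <= e * h.

Lemma Cmult_continuous (a0 b0 : C) e : 0 < e -> exists d, 0 < d /\
  forall a b, Cmod (a - a0)%C < d -> Cmod (b - b0)%C < d -> Cmod (a * b - a0 * b0)%C < e.
Proof.
intros He. set (K := 1 + Cmod a0 + Cmod b0).
assert (HK : 1 <= K) by (unfold K; pose proof (Cmod_ge_0 a0); pose proof (Cmod_ge_0 b0); lra).
exists (Rmin 1 (e / K)). split; [apply Rmin_pos; [lra|apply Rdiv_lt_0_compat; lra]|].
intros a b Ha Hb.
pose proof (Rmin_l 1 (e / K)); pose proof (Rmin_r 1 (e / K)).
set (d := Rmin 1 (e / K)) in *.
replace (a * b - a0 * b0)%C with ((a - a0) * (b - b0) + (a - a0) * b0 + a0 * (b - b0))%C by ring.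
eapply Rle_lt_trans; [eapply Rle_trans; [apply Cmod_triangle|apply Rplus_le_compat_r, Cmod_triangle]|].
rewrite !Cmod_mult.
pose proof (Cmod_ge_0 (a - a0)); pose proof (Cmod_ge_0 (b - b0)).
pose proof (Cmod_ge_0 a0); pose proof (Cmod_ge_0 b0).
assert (d * K <= e).
{ apply Rle_trans with (e / K * K); [apply Rmult_le_compat_r; lra|right; field; lra]. }
assert (Cmod (a - a0) * Cmod (b - b0) <= d * Cmod (b - b0)) by (apply Rmult_le_compat_r; lra).
assert (Cmod (a - a0) * Cmod b0 <= d * Cmod b0) by (apply Rmult_le_compat_r; lra).
assert (Cmod a0 * Cmod (b - b0) <= Cmod a0 * d) by (apply Rmult_le_compat_l; lra).
assert (d * Cmod (b - b0) < d * 1) by (apply Rmult_lt_compat_l; lra).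
unfold K in *. nra.
Qed.

Lemma continuous_within_mult P (a b : R -> C) s :
  continuous_within P a s -> continuous_within P b s ->
  continuous_within P (fun u => a u * b u)%C s.
Proof.
intros Ha Hb e He.
destruct (Cmult_continuous (a s) (b s) e He) as [d [Hd Hab]].
destruct (Ha d Hd) as [da [Hda Ha']]; destruct (Hb d Hd) as [db [Hdb Hb']].
exists (Rmin da db); split; [apply Rmin_pos; lra|].
intros u Pu Hu. apply Hab.
- apply Ha'; [exact Pu|]. eapply Rlt_le_trans; [exact Hu|apply Rmin_l].
- apply Hb'; [exact Pu|]. eapply Rlt_le_trans; [exact Hu|apply Rmin_r].
Qed.

Lemma continuous_within_subset (P Q : R -> Prop) f s :
  (forall u, P u -> Q u) -> continuous_within Q f s -> continuous_within P f s.
Proof.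
intros HPQ Hf e He. destruct (Hf e He) as [d [Hd H]].
exists d; split; [exact Hd|]. intros u Pu; apply H, HPQ, Pu.
Qed.

Lemma right_derivative_increment f s l : right_derivative f s l ->
  exists d, 0 < d /\ forall h, 0 < h < d -> Cmod (f (s + h)%R - f s)%C <= h * (Cmod l + 1).
Proof.
intros Hf. destruct (Hf 1 Rlt_0_1) as [d [Hd H]]. exists d; split; [exact Hd|].
intros h Hh. specialize (H h Hh).
replace (f (s + h)%R - f s)%C with ((f (s + h)%R - f s - h * l) + h * l)%C by ring.
eapply Rle_trans; [apply Cmod_triangle|].
rewrite Cmod_mult, Cmod_R, Rabs_right by lra. lra.
Qed.

Lemma right_derivative_mult (a b : R -> C) s la lb :
  right_derivative a s la -> right_derivative b s lb ->
  right_derivative (fun u => a u * b u)%C s (la * b s + a s * lb)%C.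
Proof.
intros Ha Hb e He.
set (A := Cmod (a s)); set (B := Cmod (b s)); set (Ka := Cmod la + 1); set (Kb := Cmod lb + 1).
assert (HA : 0 <= A) by apply Cmod_ge_0. assert (HB : 0 <= B) by apply Cmod_ge_0.
assert (HKa : 1 <= Ka) by (pose proof (Cmod_ge_0 la); unfold Ka; lra).
assert (HKb : 1 <= Kb) by (pose proof (Cmod_ge_0 lb); unfold Kb; lra).
destruct (Ha (e / (3 * (B + 1))) ltac:(apply Rdiv_lt_0_compat; lra)) as [d1 [Hd1 Da]].
destruct (Hb (e / (3 * (A + 1))) ltac:(apply Rdiv_lt_0_compat; lra)) as [d2 [Hd2 Db]].
destruct (right_derivative_increment a s la Ha) as [d3 [Hd3 Ia]].
destruct (right_derivative_increment b s lb Hb) as [d4 [Hd4 Ib]].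
set (d5 := e / (3 * Ka * Kb)).
assert (Hd5 : 0 < d5) by (apply Rdiv_lt_0_compat; nra).
exists (Rmin (Rmin d1 d2) (Rmin (Rmin d3 d4) d5)).
split; [apply Rmin_pos; apply Rmin_pos; try apply Rmin_pos; lra|].
intros h [Hh Hhd].
assert (Hsmall : h < d1 /\ h < d2 /\ h < d3 /\ h < d4 /\ h < d5).
{ pose proof (Rmin_l (Rmin d1 d2) (Rmin (Rmin d3 d4) d5)).
  pose proof (Rmin_r (Rmin d1 d2) (Rmin (Rmin d3 d4) d5)).
  pose proof (Rmin_l d1 d2); pose proof (Rmin_r d1 d2); pose proof (Rmin_l (Rmin d3 d4) d5).
  pose proof (Rmin_r (Rmin d3 d4) d5); pose proof (Rmin_l d3 d4); pose proof (Rmin_r d3 d4).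
  lra. }
destruct Hsmall as [h1 [h2 [h3 [h4 h5]]]].
specialize (Da h (conj Hh h1)); specialize (Db h (conj Hh h2)).
specialize (Ia h (conj Hh h3)); specialize (Ib h (conj Hh h4)); fold Ka in Ia; fold Kb in Ib.
replace (a (s + h)%R * b (s + h)%R - a s * b s - h * (la * b s + a s * lb))%C
  with ((a (s + h)%R - a s - h * la) * b s + a s * (b (s + h)%R - b s - h * lb)
        + (a (s + h)%R - a s) * (b (s + h)%R - b s))%C by ring.
eapply Rle_trans; [apply Cmod_triangle|].
eapply Rle_trans; [apply Rplus_le_compat_r, Cmod_triangle|]. rewrite !Cmod_mult. fold A B.
assert (T1 : Cmod (a (s + h)%R - a s - h * la)%C * B <= e / 3 * h).
{ apply Rle_trans with (e / (3 * (B + 1)) * h * (B + 1)); [|right; field; lra].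
  apply Rmult_le_compat; try apply Cmod_ge_0; lra. }
assert (T2 : A * Cmod (b (s + h)%R - b s - h * lb)%C <= e / 3 * h).
{ apply Rle_trans with ((A + 1) * (e / (3 * (A + 1)) * h)); [|right; field; lra].
  apply Rmult_le_compat; try apply Cmod_ge_0; lra. }
assert (T3 : Cmod (a (s + h)%R - a s)%C * Cmod (b (s + h)%R - b s)%C <= e / 3 * h).
{ apply Rle_trans with (h * Ka * (h * Kb)); [apply Rmult_le_compat; try apply Cmod_ge_0; lra|].
  apply Rle_trans with (d5 * Ka * Kb * h); [|right; unfold d5; field; lra].
  assert (h * Ka * Kb <= d5 * Ka * Kb) by (apply Rmult_le_compat_r; [lra|]; apply Rmult_le_compat_r; lra).
  nra. }
lra.
Qed.

Lemma growth_bound_left_closed (f : R -> C) a b c e :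
  0 <= e -> a < c <= b -> continuous_within (fun u => a <= u <= b) f c ->
  (forall u, a <= u < c -> Cmod (f u - f a)%C <= e * (u - a)) ->
  Cmod (f c - f a)%C <= e * (c - a).
Proof.
intros He Hc Hcont Hbelow. apply Rnot_lt_le; intros Hgt.
destruct (Hcont (Cmod (f c - f a)%C - e * (c - a))) as [d [Hd Hnear]]; [lra|].
set (u := Rmax a (c - d / 2)).
assert (Hu : a <= u < c /\ Rabs (u - c) < d).
{ pose proof (Rmax_l a (c - d / 2)); pose proof (Rmax_r a (c - d / 2)).
  assert (u < c) by (apply Rmax_lub_lt; lra).
  rewrite Rabs_left by lra. unfold u in *; lra. }
destruct Hu as [Hu Hud].
specialize (Hnear u ltac:(lra) Hud). specialize (Hbelow u Hu).
rewrite <- Cmod_opp in Hnear. replace (- (f u - f c))%C with (f c - f u)%C in Hnear by ring.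
pose proof (Cmod_sub_triangle (f c) (f u) (f a)).
assert (e * (u - a) <= e * (c - a)) by (apply Rmult_le_compat_l; lra).
lra.
Qed.

Lemma growth_bound_right_extend (f : R -> C) a c e :
  a <= c -> 0 < e -> right_derivative f c 0 ->
  (forall u, a <= u <= c -> Cmod (f u - f a)%C <= e * (u - a)) ->
  exists d, 0 < d /\ forall u, a <= u < c + d -> Cmod (f u - f a)%C <= e * (u - a).
Proof.
intros Hac He Hder Hupto. destruct (Hder e He) as [d [Hd Hstep]].
exists d; split; [exact Hd|]. intros u Hu.
destruct (Rle_or_lt u c) as [Huc|Huc]; [apply Hupto; lra|].
specialize (Hstep (u - c) ltac:(lra)). replace (c + (u - c)) with u in Hstep by ring.
replace (f u - f c - (u - c)%R * 0)%C with (f u - f c)%C in Hstep by ring.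
pose proof (Cmod_sub_triangle (f u) (f c) (f a)). specialize (Hupto c ltac:(lra)). lra.
Qed.

Lemma right_derivative_zero_bound (f : R -> C) a b e :
  a <= b -> 0 < e ->
  (forall s, a <= s <= b -> continuous_within (fun u => a <= u <= b) f s) ->
  (forall s, a <= s < b -> right_derivative f s 0) ->
  Cmod (f b - f a)%C <= e * (b - a).
Proof.
intros Hab He Hcont Hder.
set (E s := a <= s <= b /\ forall u, a <= u <= s -> Cmod (f u - f a)%C <= e * (u - a)).
assert (Ea : E a).
{ split; [lra|]. intros u Hu. replace u with a by lra.
  replace (f a - f a)%C with (RtoC 0) by ring. rewrite Cmod_0. lra. }
destruct (completeness E (ex_intro _ b (fun s Es => proj2 (proj1 Es))) (ex_intro _ a Ea))
  as [c [Hub Hlub]].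
assert (Hac : a <= c <= b) by (split; [apply Hub, Ea|apply Hlub; intros s Es; apply Es]).
assert (Hbelow : forall u, a <= u < c -> Cmod (f u - f a)%C <= e * (u - a)).
{ intros u Hu. apply NNPP; intros Hbad.
  assert (c <= u); [|lra].
  apply Hlub. intros s [_ Hs]. apply Rnot_lt_le; intros Hus. apply Hbad, Hs. lra. }
assert (Hupto : forall u, a <= u <= c -> Cmod (f u - f a)%C <= e * (u - a)).
{ intros u Hu. destruct (Req_dec u c) as [->|Hne]; [|apply Hbelow; lra].
  destruct (Req_dec c a) as [->|Hca]; [apply Ea; lra|].
  apply (growth_bound_left_closed f a b c e); [lra|lra|apply Hcont; lra|exact Hbelow]. }
destruct (Req_dec c b) as [<-|Hcb]; [apply Hupto; lra|].
destruct (growth_bound_right_extend f a c e (proj1 Hac) He (Hder c ltac:(lra)) Hupto) as [d [Hd Hbeyond]].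
assert (Hnext : E (Rmin (c + d / 2) b)).
{ pose proof (Rmin_l (c + d / 2) b); pose proof (Rmin_r (c + d / 2) b).
  assert (c < Rmin (c + d / 2) b) by (apply Rmin_glb_lt; lra).
  split; [lra|]. intros u Hu. apply Hbeyond; lra. }
specialize (Hub _ Hnext). assert (c < Rmin (c + d / 2) b) by (apply Rmin_glb_lt; lra). lra.
Qed.

Lemma right_derivative_zero_const (f : R -> C) a b :
  a <= b ->
  (forall s, a <= s <= b -> continuous_within (fun u => a <= u <= b) f s) ->
  (forall s, a <= s < b -> right_derivative f s 0) ->
  f b = f a.
Proof.
intros Hab Hcont Hder.
assert (Hzero : Cmod (f b - f a)%C = 0).
{ apply Rle_antisym; [|apply Cmod_ge_0]. apply Rnot_lt_le; intros Hpos.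
  set (k := Cmod (f b - f a)%C) in *.
  assert (Hbound := right_derivative_zero_bound f a b (k / (2 * (b - a + 1))) Hab
    ltac:(apply Rdiv_lt_0_compat; lra) Hcont Hder). fold k in Hbound.
  assert (k / (2 * (b - a + 1)) * (b - a) < k); [|lra].
  apply Rle_lt_trans with (k / 2); [|lra].
  apply Rle_trans with (k / (2 * (b - a + 1)) * (b - a + 1)); [|right; field; lra].
  apply Rmult_le_compat_l; [apply Rlt_le, Rdiv_lt_0_compat; lra|lra]. }
apply Cmod_eq_0 in Hzero. replace (f b) with (f b - f a + f a)%C by ring. rewrite Hzero. ring.
Qed.

Lemma derivable_pt_lim_linearization (f : R -> R) x l :
  derivable_pt_lim f x l -> forall e, 0 < e -> exists d, 0 < d /\
    forall h, Rabs h < d -> Rabs (f (x + h) - f x - h * l) <= e * Rabs h.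
Proof.
intros Hf e He. destruct (Hf e He) as [d Hd]. exists d; split; [apply cond_pos|].
intros h Hh. destruct (Req_dec h 0) as [->|Hh0].
- rewrite Rplus_0_r, Rabs_R0. replace (f x - f x - 0 * l) with 0 by ring. rewrite Rabs_R0. lra.
- replace (f (x + h) - f x - h * l) with (h * ((f (x + h) - f x) / h - l)) by (field; exact Hh0).
  rewrite Rabs_mult, Rmult_comm. apply Rmult_le_compat_r; [apply Rabs_pos|].
  apply Rlt_le, Hd; assumption.
Qed.

Lemma Cexp_add (z w : C) : Cexp (z + w) = (Cexp z * Cexp w)%C.
Proof.
destruct z as [a b], w as [c d]. unfold Cexp, Cplus, Cmult; simpl.
rewrite exp_plus, cos_plus, sin_plus. f_equal; ring.
Qed.

Lemma Cexp_0 : Cexp 0 = 1.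
Proof. unfold Cexp, RtoC; simpl. rewrite exp_0, cos_0, sin_0. f_equal; ring. Qed.

Lemma Cexp_linearization (mu : C) e : 0 < e -> exists d, 0 < d /\
  forall h, Rabs h < d -> Cmod (Cexp (h * mu) - 1 - h * mu)%C <= e * Rabs h.
Proof.
intros He. destruct mu as [m1 m2].
(* Since [RtoC h = (h, 0)], these are the real and imaginary parts of [Cexp (h * (m1, m2))]. *)
assert (Dre : derivable_pt_lim (fun h => exp (h * m1 - 0 * m2) * cos (h * m2 + 0 * m1)) 0 m1).
{ apply is_derive_Reals. auto_derive; [exact I|].
  rewrite !Rmult_0_l, Ropp_0, !Rplus_0_l, exp_0, cos_0, sin_0. ring. }
assert (Dim : derivable_pt_lim (fun h => exp (h * m1 - 0 * m2) * sin (h * m2 + 0 * m1)) 0 m2).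
{ apply is_derive_Reals. auto_derive; [exact I|].
  rewrite !Rmult_0_l, Ropp_0, !Rplus_0_l, exp_0, cos_0, sin_0. ring. }
destruct (derivable_pt_lim_linearization _ _ _ Dre (e / 2) ltac:(lra)) as [d1 [Hd1 H1]].
destruct (derivable_pt_lim_linearization _ _ _ Dim (e / 2) ltac:(lra)) as [d2 [Hd2 H2]].
exists (Rmin d1 d2); split; [apply Rmin_pos; assumption|].
intros h Hh.
specialize (H1 h ltac:(eapply Rlt_le_trans; [exact Hh|apply Rmin_l])).
specialize (H2 h ltac:(eapply Rlt_le_trans; [exact Hh|apply Rmin_r])).
rewrite !Rplus_0_l in *.
eapply Rle_trans; [apply Cmod_le_abs_re_im|]. simpl.
replace (0 * m1 - 0 * m2) with 0 in H1, H2 by ring.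
replace (0 * m2 + 0 * m1) with 0 in H1, H2 by ring.
rewrite exp_0, cos_0 in H1. rewrite exp_0, sin_0 in H2.
set (E1 := exp (h * m1 - 0 * m2) * cos (h * m2 + 0 * m1)) in *.
set (E2 := exp (h * m1 - 0 * m2) * sin (h * m2 + 0 * m1)) in *.
replace (E1 + - (1) + - (h * m1 - 0 * m2)) with (E1 - 1 * 1 - h * m1) by ring.
replace (E2 + - 0 + - (h * m2 + 0 * m1)) with (E2 - 1 * 0 - h * m2) by ring.
lra.
Qed.

Lemma Cexp_shift (mu : C) s h : Cexp ((s + h)%R * mu) = (Cexp (s * mu) * Cexp (h * mu))%C.
Proof. rewrite <- Cexp_add. f_equal. rewrite RtoC_plus. ring. Qed.

Lemma Cexp_right_derivative (mu : C) s :
  right_derivative (fun u => Cexp (u * mu)) s (mu * Cexp (s * mu))%C.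
Proof.
intros e He. set (K := Cmod (Cexp (s * mu)) + 1).
assert (HK : 1 <= K) by (pose proof (Cmod_ge_0 (Cexp (s * mu))); unfold K; lra).
destruct (Cexp_linearization mu (e / K) ltac:(apply Rdiv_lt_0_compat; lra)) as [d [Hd Hlin]].
exists d; split; [exact Hd|]. intros h Hh.
rewrite Cexp_shift.
replace (Cexp (s * mu) * Cexp (h * mu) - Cexp (s * mu) - h * (mu * Cexp (s * mu)))%C
  with (Cexp (s * mu) * (Cexp (h * mu) - 1 - h * mu))%C by ring.
rewrite Cmod_mult.
specialize (Hlin h ltac:(rewrite Rabs_right; lra)). rewrite Rabs_right in Hlin by lra.
apply Rle_trans with (K * (e / K * h)); [|right; field; lra].
apply Rmult_le_compat; [apply Cmod_ge_0|apply Cmod_ge_0|unfold K; lra|exact Hlin].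
Qed.

Lemma Cexp_continuous_within P (mu : C) s : continuous_within P (fun u => Cexp (u * mu)) s.
Proof.
intros e He. set (K := (Cmod (Cexp (s * mu)) + 1) * (Cmod mu + 1)).
assert (HK : 1 <= K) by (pose proof (Cmod_ge_0 (Cexp (s * mu))); pose proof (Cmod_ge_0 mu);
  unfold K; nra).
destruct (Cexp_linearization mu 1 Rlt_0_1) as [d [Hd Hlin]].
exists (Rmin d (e / K)); split; [apply Rmin_pos; [lra|apply Rdiv_lt_0_compat; lra]|].
intros u _ Hu.
assert (Hu1 : Rabs (u - s) < d) by (eapply Rlt_le_trans; [exact Hu|apply Rmin_l]).
assert (Hu2 : Rabs (u - s) * K < e).
{ apply Rlt_le_trans with (e / K * K); [|right; field; lra].
  apply Rmult_lt_compat_r; [lra|]. eapply Rlt_le_trans; [exact Hu|apply Rmin_r]. }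
replace u with (s + (u - s)) by ring. rewrite Cexp_shift.
replace (Cexp (s * mu) * Cexp ((u - s)%R * mu) - Cexp (s * mu))%C
  with (Cexp (s * mu) * ((Cexp ((u - s)%R * mu) - 1 - (u - s)%R * mu) + (u - s)%R * mu))%C by ring.
rewrite Cmod_mult.
specialize (Hlin (u - s) Hu1).
assert (Hinc : Cmod ((Cexp ((u - s)%R * mu) - 1 - (u - s)%R * mu) + (u - s)%R * mu)%C
               <= Rabs (u - s) * (Cmod mu + 1)).
{ eapply Rle_trans; [apply Cmod_triangle|]. rewrite Cmod_mult, Cmod_R. lra. }
pose proof (Cmod_ge_0 (Cexp (s * mu))). pose proof (Rabs_pos (u - s)).
apply Rle_lt_trans with (Cmod (Cexp (s * mu)) * (Rabs (u - s) * (Cmod mu + 1))).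
- apply Rmult_le_compat_l; assumption.
- unfold K in Hu2. pose proof (Cmod_ge_0 mu). nra.
Qed.

(* Coquelicot's product rule lives in [AbsRing_NormedModule C_AbsRing], whereas [holo_on] is
   stated in [C_NormedModule]; the two structures have the same derivatives. *)
Lemma is_derive_C_NormedModule (F : C -> C) z l :
  @is_derive C_AbsRing (AbsRing_NormedModule C_AbsRing) F z l ->
  @is_derive C_AbsRing C_NormedModule F z l.
Proof. intros [[] Hdom]; split; [split|]; assumption. Qed.

Lemma is_derive_AbsRing_NormedModule (F : C -> C) z l :
  @is_derive C_AbsRing C_NormedModule F z l ->
  @is_derive C_AbsRing (AbsRing_NormedModule C_AbsRing) F z l.
Proof. intros [[] Hdom]; split; [split|]; assumption. Qed.

Lemma holo_on_scal U (F : C -> C) (a : C) : holo_on U F -> holo_on U (fun z => a * F z)%C.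
Proof.
intros HF z Hz. destruct (HF z Hz) as [l D]. eexists. apply is_derive_C_NormedModule.
exact (is_derive_mult (fun _ => a) F z zero l (@is_derive_const _ (AbsRing_NormedModule C_AbsRing) a z)
  (is_derive_AbsRing_NormedModule F z l D) Cmult_comm).
Qed.

Lemma holo_on_plus U (F G : C -> C) : holo_on U F -> holo_on U G -> holo_on U (fun z => F z + G z)%C.
Proof. intros HF HG z Hz. exact (ex_derive_plus F G z (HF z Hz) (HG z Hz)). Qed.

Lemma holo_on_pow U n : holo_on U (fun z => z ^ n)%C.
Proof.
intros z _. induction n as [|n [l D]].
- exists zero. apply is_derive_C_NormedModule, (@is_derive_const _ (AbsRing_NormedModule C_AbsRing) (RtoC 1)).
- eexists. apply is_derive_C_NormedModule.
  exact (is_derive_mult (fun w => w) (fun w => w ^ n)%C z one l (is_derive_id z)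
    (is_derive_AbsRing_NormedModule _ z l D) Cmult_comm).
Qed.

Lemma C_open_and (U V : C -> Prop) : C_open U -> C_open V -> C_open (fun z => U z /\ V z).
Proof.
intros HU HV z [Uz Vz].
destruct (HU z Uz) as [r [Hr HrU]]; destruct (HV z Vz) as [q [Hq HqV]].
exists (Rmin r q); split; [apply Rmin_pos; assumption|].
intros w Hw; split; [apply HrU|apply HqV]; eapply Rlt_le_trans; eauto; [apply Rmin_l|apply Rmin_r].
Qed.

Lemma analytic_lin f g a b : analytic f -> analytic g -> analytic (fadd (fscale a f) (fscale b g)).
Proof.
intros [U [F [[HUo HUR] [HF HFf]]]] [V [G [[HVo HVR] [HG HGg]]]].
exists (fun z => U z /\ V z), (fun z => a * F z + b * G z)%C.
split; [split; [apply C_open_and; assumption|intros x; split; auto]|split].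
- apply holo_on_plus; apply holo_on_scal;
    [intros z [Uz _]; apply HF, Uz|intros z [_ Vz]; apply HG, Vz].
- intros x. unfold fadd, fscale. rewrite HFf, HGg. reflexivity.
Qed.

Lemma analytic_pow n : analytic (fun y : R => RtoC (y ^ n)).
Proof.
exists (fun _ => True), (fun z => z ^ n)%C.
split; [split; [intros z _; exists 1; split; [lra|auto]|auto]|split].
- apply holo_on_pow.
- intros x. symmetry. apply RtoC_pow.
Qed.

Lemma C_compact_singleton (z0 : C) : C_compact (fun z => z = z0).
Proof.
split.
- exists (Cmod z0). intros z ->. lra.
- intros z Hz. exists (Cmod (z - z0)%C). split.
  + apply Cmod_gt_0. intros H0. apply Hz. replace z with (z - z0 + z0)%C by ring. rewrite H0. ring.
  + intros w Hw ->. rewrite <- Cmod_opp in Hw. replace (- (z0 - z))%C with (z - z0)%C in Hw by ring. lra.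
Qed.

Definition eval_ball (x eps : R) (f : R -> C) : Prop := analytic f /\ Cmod (f x) < eps.

Lemma ind_nbhd0_eval_ball x eps : 0 < eps -> ind_nbhd0 (eval_ball x eps).
Proof.
intros Heps. split; [|split].
- intros f [Hf _]; exact Hf.
- intros f g a b [Hf Hfx] [Hg Hgx] Hab. split; [apply analytic_lin; assumption|].
  unfold fadd, fscale. eapply Rle_lt_trans; [apply Cmod_triangle|]. rewrite !Cmod_mult.
  pose proof (Cmod_ge_0 a); pose proof (Cmod_ge_0 b).
  set (K := Rmax (Cmod (f x)) (Cmod (g x))).
  assert (Cmod (f x) <= K) by apply Rmax_l. assert (Cmod (g x) <= K) by apply Rmax_r.
  assert (K < eps) by (apply Rmax_lub_lt; assumption).
  apply Rle_lt_trans with ((Cmod a + Cmod b) * K); [nra|].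
  pose proof (Cmod_ge_0 (f x)). nra.
- intros U HU. exists (fun z => z = RtoC x), eps.
  split; [apply C_compact_singleton|split; [intros z ->; apply HU|split; [exact Heps|]]].
  intros F HF HK. split; [exists U, F; auto|apply HK; reflexivity].
Qed.


Section SemigroupEigenvector.

Variables (M : (R -> C) -> (R -> C)) (T : R -> (R -> C) -> (R -> C)).
Hypothesis HT : C0_semigroup T.
Hypothesis HMT : generates M T.
Variables (p : R -> C) (mu : C) (x : R).
Hypothesis Hp : analytic p.
Hypothesis Hmu : forall y, M p y = (mu * p y)%C.

Lemma orbit_continuous s : 0 <= s -> continuous_within (fun u => 0 <= u) (fun u => T u p x) s.
Proof.
intros Hs e He. destruct HT as [_ [_ [_ Hcont]]].
destruct (Hcont p Hp s Hs _ (ind_nbhd0_eval_ball x e He)) as [d [Hd H]].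
exists d; split; [exact Hd|]. intros u Hu Hus. apply (H u Hu Hus).
Qed.

Lemma orbit_right_derivative s : 0 <= s ->
  right_derivative (fun u => T u p x) s (mu * T s p x)%C.
Proof.
intros Hs e He. destruct HT as [Hlin [Hsemi _]].
destruct (Hlin s Hs) as [_ [Hadd Hcont]].
destruct (Hcont _ (ind_nbhd0_eval_ball x e He)) as [W [HW HWV]].
destruct (HMT p Hp W HW) as [d [Hd Hquot]].
exists d; split; [exact Hd|]. intros h [Hh Hhd].
assert (Hq : fsub (fscale (RtoC (/ h)) (fsub (T h p) p)) (M p)
             = fadd (fscale (RtoC (/ h)) (T h p)) (fscale (- RtoC (/ h) - mu)%C p)).
{ apply functional_extensionality; intros y. unfold fadd, fsub, fscale. rewrite Hmu. ring. }
destruct (HWV _ (Hquot h Hh Hhd)) as [_ Hqx].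
assert (HThp : analytic (T h p)) by (apply (Hlin h); [lra|exact Hp]).
rewrite Hq, Hadd, Hsemi in Hqx by (assumption || lra).
replace (T (s + h)%R p x - T s p x - h * (mu * T s p x))%C
  with (h * (/ h * T (s + h)%R p x + (- / h - mu) * T s p x))%C
  by (field; intros H0; apply RtoC_inj in H0; lra).
rewrite RtoC_inv in Hqx by lra.
rewrite Cmod_mult, Cmod_R, Rabs_right by lra. rewrite Rmult_comm.
apply Rmult_le_compat_r; lra.
Qed.

Theorem C0_semigroup_eigenvector t : 0 <= t -> T t p x = (Cexp (t * mu) * p x)%C.
Proof.
intros Ht. set (phi (u : R) := (Cexp (u * - mu) * T u p x)%C).
assert (Hphi : phi t = phi 0).
{ apply right_derivative_zero_const; [exact Ht| |]; unfold phi.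
  - intros s Hs. apply continuous_within_mult; [apply Cexp_continuous_within|].
    apply (continuous_within_subset _ (fun u => 0 <= u)); [intros u Hu; lra|].
    apply orbit_continuous; lra.
  - intros s Hs.
    replace (RtoC 0) with (- mu * Cexp (s * - mu) * T s p x + Cexp (s * - mu) * (mu * T s p x))%C
      by ring.
    apply (right_derivative_mult (fun u => Cexp (u * - mu)) (fun u => T u p x));
      [apply Cexp_right_derivative|apply orbit_right_derivative; lra]. }
destruct HT as [_ [_ [HT0 _]]].
unfold phi in Hphi. rewrite Cmult_0_l, Cexp_0, Cmult_1_l, HT0 in Hphi by exact Hp.
rewrite <- Hphi, Cmult_assoc, <- Cexp_add.
replace (t * mu + t * - mu)%C with (RtoC 0) by ring. rewrite Cexp_0. ring.
Qed.

End SemigroupEigenvector.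

Theorem mainTheorem2 (M : (R -> C) -> (R -> C)) (m : nat -> C)
  (T : R -> (R -> C) -> (R -> C)) :
  is_multiplier M m -> C0_semigroup T -> generates M T ->
  forall t, 0 <= t -> is_multiplier (T t) (fun n => Cexp (Cmult (RtoC t) (m n))).
Proof.
intros [_ Hm] HT HMT t Ht. split; [apply HT, Ht|].
intros n x.
apply (C0_semigroup_eigenvector M T HT HMT _ (m n) x (analytic_pow n) (Hm n) t Ht).
Qed.
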